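(* Let $\mathcal{C}$ be a d-category and let $\omega,\psi$ be paths in $\mathcal{C}$ with $\omega\simeq\psi$. Then the track objects $\widehat\omega$ and $\widehat\psi$ are isomorphic as $\mathcal{C}$-automata.
   Context: A d-category is a small category $\mathcal{C}$ with wide subcategories $\mathcal{C}^+$ (formorphisms) and $\mathcal{C}^-$ (backmorphisms) such that an invertible $\varphi$ is in $\mathcal{C}^+$ iff $\varphi^{-1}\in\mathcal{C}^-$. A linear category is a bipointed d-category isomorphic to a finite (possibly empty) concatenation (gluing $\top$ of one to $\bot$ of the next) of $\mathbf S$ (one formorphism $\bot\to\top$), $\mathbf T$ (one backmorphism $\top\to\bot$), $\mathbf I$ (mutually inverse formorphism $\bot\to\top$ and backmorphism $\top\to\bot$). A path in $\mathcal{C}$ is a d-functor $\omega:\mathcal I\to\mathcal{C}$ from a linear category. Write $\omega\preceq\psi$ if there is a basepoint-preserving d-functor $F$ between their domains with $\psi\circ F=\omega$; $\simeq$ is the equivalence relation generated by $\preceq$. A $\mathcal{C}$-automaton is a presheaf $X:\mathcal{C}^{op}\to\mathbf{Set}$ with sets of start and accept elements; morphisms are presheaf maps preserving them. The track object of $\omega:\mathcal I\to\mathcal{C}$ is the automaton $\widehat\omega=\operatorname{colim}_{i\in\mathcal I}\mathcal{C}(-,\omega(i))$ with single start element the image of $\mathrm{id}_{\omega(\bot)}$ and single accept element the image of $\mathrm{id}_{\omega(\top)}$. *)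

From mathcomp Require Import all_boot.
From Stdlib Require Import ProofIrrelevance Relation_Operators.

Set Implicit Arguments.
Unset Strict Implicit.
Unset Printing Implicit Defensive.

Record Cat := {
  ob :> Type;
  hom : ob -> ob -> Type;
  idm : forall a, hom a a;
  comp : forall a b c, hom b c -> hom a b -> hom a c;
  comp_id_l : forall a b (f : hom a b), comp (idm b) f = f;
  comp_id_r : forall a b (f : hom a b), comp f (idm a) = f;
  comp_assoc : forall a b c d (f : hom a b) (g : hom b c) (h : hom c d),
      comp h (comp g f) = comp (comp h g) f
}.
Arguments hom {C} a b : rename.
Arguments idm {C} a : rename.
Arguments comp {C a b c} g f : rename.

Record DCat := {
  dcat :> Cat;
  dfwd : forall a b : dcat, hom a b -> Prop;
  dbwd : forall a b : dcat, hom a b -> Prop;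
  dfwd_id : forall a, dfwd (idm a);
  dbwd_id : forall a, dbwd (idm a);
  dfwd_comp : forall a b c (f : hom a b) (g : hom b c),
      dfwd f -> dfwd g -> dfwd (comp g f);
  dbwd_comp : forall a b c (f : hom a b) (g : hom b c),
      dbwd f -> dbwd g -> dbwd (comp g f);
  dinv : forall a b (f : hom a b) (g : hom b a),
      comp g f = idm a -> comp f g = idm b -> (dfwd f <-> dbwd g)
}.
Arguments dfwd {D a b} f : rename.
Arguments dbwd {D a b} f : rename.

Record Functor (C D : Cat) := {
  fobj :> C -> D;
  fmor : forall a b, hom a b -> hom (fobj a) (fobj b);
  fmor_id : forall a, fmor (idm a) = idm (fobj a);
  fmor_comp : forall a b c (f : hom a b) (g : hom b c),
      fmor (comp g f) = comp (fmor g) (fmor f)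
}.
Arguments fmor {C D} F {a b} f : rename.

Record DFunctor (C D : DCat) := {
  dfun :> Functor C D;
  dfun_fwd : forall a b (f : hom a b), dfwd f -> dfwd (fmor dfun f);
  dfun_bwd : forall a b (f : hom a b), dbwd f -> dbwd (fmor dfun f)
}.

(** An isomorphism of d-categories: a d-functor bijective on objects and
    on every hom-set, whose inverse is again a d-functor (i.e. it reflects
    formorphisms and backmorphisms). *)
Definition DIso (C D : DCat) (F : DFunctor C D) : Prop :=
  bijective (fobj F) /\
  (forall a b, bijective (@fmor _ _ F a b)) /\
  (forall a b (f : hom a b), dfwd (fmor F f) -> dfwd f) /\
  (forall a b (f : hom a b), dbwd (fmor F f) -> dbwd f).

(** * The standard linear categories: finite concatenations of S, T, I *)
Inductive letter := LS | LT | LI.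

Definition fwd_ok (l : letter) : bool := if l is LT then false else true.
Definition bwd_ok (l : letter) : bool := if l is LS then false else true.

(** Objects of the concatenation of the word w are 0..size w (the gluing
    points); there is (exactly one) morphism i -> j iff every segment
    between i and j can be traversed in the required direction. *)
Definition lin_hom (w : seq letter) (i j : 'I_(size w).+1) : Prop :=
  forall k : nat,
    ((i <= k < j)%N -> fwd_ok (nth LI w k)) /\
    ((j <= k < i)%N -> bwd_ok (nth LI w k)).

Lemma lin_hom_id w (i : 'I_(size w).+1) : lin_hom i i.
Proof.
move=> k; split=> /andP [H1 H2]; exfalso; move: H1 H2; rewrite leqNgt => /negP; done.
Qed.

Lemma lin_hom_comp w (i j m : 'I_(size w).+1) :
  lin_hom j m -> lin_hom i j -> lin_hom i m.
Proof.
move=> H2 H1 k; split=> /andP [Ha Hb].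
- case: (ltnP k j) => Hkj.
  + by apply: (proj1 (H1 k)); rewrite Ha Hkj.
  + by apply: (proj1 (H2 k)); rewrite Hkj Hb.
- case: (ltnP k j) => Hkj.
  + by apply: (proj2 (H2 k)); rewrite Ha Hkj.
  + by apply: (proj2 (H1 k)); rewrite Hkj Hb.
Qed.

Definition LinCat (w : seq letter) : Cat.
Proof.
refine (@Build_Cat 'I_(size w).+1 (@lin_hom w) (@lin_hom_id w)
          (fun a b c g f => @lin_hom_comp w a b c g f) _ _ _);
  intros; apply: proof_irrelevance.
Defined.

Definition LinDCat (w : seq letter) : DCat.
Proof.
refine (@Build_DCat (LinCat w)
          (fun a b _ => (nat_of_ord a <= nat_of_ord b)%N)
          (fun a b _ => (nat_of_ord b <= nat_of_ord a)%N) _ _ _ _ _).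
- by move=> a /=.
- by move=> a /=.
- by move=> a b c _ _ /= H1 H2; apply: leq_trans H1 H2.
- by move=> a b c _ _ /= H1 H2; apply: leq_trans H2 H1.
- by move=> a b _ _ _ _ /=.
Defined.

Definition lin_bot (w : seq letter) : LinDCat w := @ord0 (size w).
Definition lin_top (w : seq letter) : LinDCat w := @ord_max (size w).

Record Linear := {
  ldcat :> DCat;
  lbot : ldcat;
  ltop : ldcat;
  lin_spec : exists (w : seq letter) (F : DFunctor (LinDCat w) ldcat),
      DIso F /\ F (lin_bot w) = lbot /\ F (lin_top w) = ltop
}.

Record Path (C : DCat) := {
  pdom : Linear;
  pfun : DFunctor pdom C
}.

Definition cast_hom (C : Cat) (a a' b b' : C) (ea : a = a') (eb : b = b')
  (f : hom a b) : hom a' b' :=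
  match ea in _ = x, eb in _ = y return hom x y with
  | erefl, erefl => f
  end.

(** omega <= psi : a basepoint-preserving d-functor F between the domains
    with psi o F = omega (equality of functors, spelled out). *)
Definition path_le (C : DCat) (om ps : Path C) : Prop :=
  exists F : DFunctor (pdom om) (pdom ps),
    F (lbot (pdom om)) = lbot (pdom ps) /\
    F (ltop (pdom om)) = ltop (pdom ps) /\
    exists e : forall i, pfun ps (F i) = pfun om i,
      forall i j (u : hom i j),
        cast_hom (e i) (e j) (fmor (pfun ps) (fmor F u)) = fmor (pfun om) u.

Definition path_equiv (C : DCat) : Path C -> Path C -> Prop :=
  clos_refl_sym_trans (Path C) (@path_le C).

Record Presheaf (C : Cat) := {
  psh :> C -> Type;
  pact : forall a b, hom a b -> psh b -> psh a;
  pact_id : forall a x, pact (idm a) x = x;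
  pact_comp : forall a b c (f : hom a b) (g : hom b c) x,
      pact (comp g f) x = pact f (pact g x)
}.
Arguments pact {C} X {a b} f x : rename.

Record NatTrans (C : Cat) (X Y : Presheaf C) := {
  nt :> forall a, X a -> Y a;
  nt_nat : forall a b (f : hom a b) x, nt (pact X f x) = pact Y f (nt x)
}.

Definition yon (C : Cat) (c : C) : Presheaf C.
Proof.
refine (@Build_Presheaf C (fun a => hom a c) (fun a b f g => comp g f) _ _).
- by move=> a x; apply: comp_id_r.
- by move=> a b d f g x; rewrite comp_assoc.
Defined.

(** a C-automaton: a presheaf with sets of start and accept elements
    (elements of a presheaf X are pairs (a, x) with x in X(a)) *)
Record Automaton (C : Cat) := {
  apsh :> Presheaf C;
  astart : {a : C & apsh a} -> Prop;
  aaccept : {a : C & apsh a} -> Prop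
}.
Arguments astart {C} A p : rename.
Arguments aaccept {C} A p : rename.

Definition aut_mor (C : Cat) (A B : Automaton C) (f : NatTrans A B) : Prop :=
  (forall a x, astart A (existT _ a x) -> astart B (existT _ a (f a x))) /\
  (forall a x, aaccept A (existT _ a x) -> aaccept B (existT _ a (f a x))).

Definition aut_iso (C : Cat) (A B : Automaton C) : Prop :=
  exists (f : NatTrans A B) (g : NatTrans B A),
    aut_mor f /\ aut_mor g /\
    (forall a x, g a (f a x) = x) /\ (forall a y, f a (g a y) = y).

Definition cocone (C : DCat) (om : Path C) (X : Presheaf C)
  (lam : forall i : pdom om, NatTrans (yon (pfun om i)) X) : Prop :=
  forall (i j : pdom om) (u : hom i j) (a : C) (g : hom a (pfun om i)),
    lam j a (comp (fmor (pfun om) u) g) = lam i a g.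

Definition is_colimit (C : DCat) (om : Path C) (X : Presheaf C)
  (lam : forall i : pdom om, NatTrans (yon (pfun om i)) X) : Prop :=
  cocone lam /\
  forall (Z : Presheaf C) (mu : forall i : pdom om, NatTrans (yon (pfun om i)) Z),
    cocone mu ->
    exists h : NatTrans X Z,
      (forall i a g, h a (lam i a g) = mu i a g) /\
      (forall h' : NatTrans X Z, (forall i a g, h' a (lam i a g) = mu i a g) ->
         forall a x, h' a x = h a x).

Definition is_track (C : DCat) (om : Path C) (A : Automaton C) : Prop :=
  exists lam : forall i : pdom om, NatTrans (yon (pfun om i)) A,
    is_colimit lam /\
    (forall p, astart A p <->
       p = existT _ (pfun om (lbot (pdom om)))
                    (lam (lbot (pdom om)) _ (idm (pfun om (lbot (pdom om)))))) /\
    (forall p, aaccept A p <->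
       p = existT _ (pfun om (ltop (pdom om)))
                    (lam (ltop (pdom om)) _ (idm (pfun om (ltop (pdom om)))))).

(** A basepoint-preserving d-functor F : I -> J between linear categories is
    final.  In coordinates it maps the gluing points 0..n of I monotonically
    onto a chain from 0 to the last point of J, consecutive images being
    joined by a morphism of J; so every j has a morphism into the image (the
    comma category j/F is nonempty), and the points of I whose image is
    reachable from j form an interval (j/F is connected).  As J is thin,
    compatible families on J are exactly the unique extensions of compatible
    families on I along F.  For omega = psi F this makes restriction of
    cocones under psi to cocones under omega a natural bijection, so omega and
    psi have the same colimits, with the same start and accept elements, and
    uniqueness of colimits turns equal track objects into isomorphic automata. *)

From mathcomp Require Import all_boot zify.
From Stdlib Require Import Relation_Operators ProofIrrelevance ClassicalEpsilon.

Set Implicit Arguments.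
Unset Strict Implicit.
Unset Printing Implicit Defensive.

Definition lin_rel (w : seq letter) (i j : nat) : Prop :=
  forall k : nat,
    ((i <= k < j)%N -> fwd_ok (nth LI w k)) /\
    ((j <= k < i)%N -> bwd_ok (nth LI w k)).

Lemma lin_rel_refl w i : lin_rel w i i.
Proof. by move=> k; split=> /andP[ik]; rewrite ltnNge ik. Qed.

Lemma lin_rel_between w k a b c :
  lin_rel w k a -> lin_rel w k b -> a <= c <= b -> lin_rel w k c.
Proof.
move=> ka kb /andP[ac cb] t; split=> /andP[kt tc].
- by apply: (proj1 (kb t)); rewrite kt (leq_trans tc).
- by apply: (proj2 (ka t)); rewrite (leq_trans ac).
Qed.

Lemma lin_rel_fwd_tail w a b k : lin_rel w a b -> a <= k <= b -> lin_rel w k b.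
Proof.
move=> ab /andP[ak kb] t; split=> /andP[kt tb].
- by apply: (proj1 (ab t)); rewrite tb (leq_trans ak).
- by move: (leq_trans tb kb); rewrite ltnNge kt.
Qed.

Lemma lin_rel_bwd_tail w a b k : lin_rel w b a -> a <= k <= b -> lin_rel w k a.
Proof.
move=> ba /andP[ak kb] t; split=> /andP[kt ta].
- by move: ta; rewrite ltnNge (leq_trans ak kt).
- by apply: (proj2 (ba t)); rewrite kt (leq_trans ta).
Qed.

Lemma lin_rel_succ w r : lin_rel w r r.+1 \/ lin_rel w r.+1 r.
Proof.
have only_r t : r <= t < r.+1 -> t = r by lia.
have none t : r.+1 <= t < r -> False by lia.
case E: (nth LI w r); [left|right|left]=> t;
  by split=> tr; first [case: (none _ tr) | rewrite (only_r _ tr) E].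
Qed.

Section Zigzag.

Variables (w : seq letter) (n : nat) (phi : nat -> nat).
Hypothesis phi_step : forall r, r < n ->
  phi r <= phi r.+1 /\ (lin_rel w (phi r) (phi r.+1) \/ lin_rel w (phi r.+1) (phi r)).

Lemma zigzag_mono p q : p <= q <= n -> phi p <= phi q.
Proof.
case/andP=> pq qn.
apply: (homo_leq_in (D := [pred r | r <= n]) (f := phi) (r := leq) leqnn)
  => //; first exact: leq_trans.
- by move=> i j _ jn k /andP[_ /ltnW /leq_trans]; apply.
- by move=> r _ rn; case: (phi_step rn).
- exact: leq_trans qn.
Qed.

Lemma zigzag_cover k : phi 0 <= k <= phi n -> exists2 p, p <= n & lin_rel w k (phi p).
Proof.
case/andP=> k0 kn.
pose P := [pred p | (p <= n) && (phi p <= k)].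
have exP : exists p, P p by exists 0; rewrite /= k0.
have ubP p : P p -> p <= n by case/andP.
case: (ex_maxnP exP ubP) => p /andP[pn pk] pmax.
case: (ltnP p n) => [lt_pn|]; last first.
  move=> np; have pn_eq : p = n by apply/eqP; rewrite eqn_leq pn.
  have -> : k = phi n by apply/eqP; rewrite eqn_leq kn -pn_eq.
  by exists n => //; apply: lin_rel_refl.
have kp1 : k < phi p.+1.
  by rewrite ltnNge; apply/negP => /(conj lt_pn)/andP/pmax; rewrite ltnn.
have [_ [fwd|bwd]] := phi_step lt_pn.
- by exists p.+1 => //; apply: (lin_rel_fwd_tail fwd); rewrite pk ltnW.
- by exists p; [exact: pn | apply: (lin_rel_bwd_tail bwd); rewrite pk ltnW].
Qed.

End Zigzag.

Definition is_chart (L : Linear) (w : seq letter) (g : L -> 'I_(size w).+1) : Prop :=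
  [/\ g (lbot L) = 0 :> nat, g (ltop L) = size w :> nat,
      forall x y : L, inhabited (hom x y) <-> lin_rel w (g x) (g y) &
      forall (x y : L) (f : hom x y), (dfwd f <-> g x <= g y) /\ (dbwd f <-> g y <= g x)].

Lemma linear_chart (L : Linear) :
  exists (w : seq letter) (g : L -> 'I_(size w).+1), bijective g /\ is_chart g.
Proof.
have [w [G [[[g GK gK] [Gbij [Gfwd Gbwd]]] [Gbot Gtop]]]] := lin_spec L.
exists w, g; split; first exact: Bijective gK GK.
split; [by rewrite -Gbot GK | by rewrite -Gtop GK | | ].
- move=> x y; rewrite -[x]gK -[y]gK !GK; split=> [[f]|gxy].
  + by have [fi _ _] := Gbij (g x) (g y); exact: (fi f).
  + by constructor; exact: (fmor G gxy).
- move=> x y; rewrite -[x]gK -[y]gK !GK => f.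
  have [fi _ fiK] := Gbij (g x) (g y); rewrite -(fiK f).
  by do 2![split] => [/Gfwd|le|/Gbwd|le] //; [apply: dfun_fwd | apply: dfun_bwd].
Qed.

Lemma linear_thin (L : Linear) (x y : L) (f f' : hom x y) : f = f'.
Proof.
have [w [G [[[g GK gK] [Gbij _]] _]]] := lin_spec L.
move: f f'; rewrite -[x]gK -[y]gK => f f'.
have [fi _ fiK] := Gbij (g x) (g y).
by rewrite -(fiK f) -(fiK f') (proof_irrelevance (lin_hom (g x) (g y)) (fi f) (fi f')).
Qed.

Definition comma_step (I J : Cat) (F : Functor I J) (j : J) (a b : I) : Prop :=
  [/\ inhabited (hom j (F a)), inhabited (hom j (F b)) & inhabited (hom a b)].

Section ChartedFunctor.

Variables (I J : Linear) (F : DFunctor I J).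
Hypotheses (F_bot : F (lbot I) = lbot J) (F_top : F (ltop I) = ltop J).
Variables (v w : seq letter) (h : I -> 'I_(size v).+1) (h' : 'I_(size v).+1 -> I).
Variable g : J -> 'I_(size w).+1.
Hypotheses (hK : cancel h h') (h'K : cancel h' h).
Hypotheses (h_chart : is_chart h) (g_chart : is_chart g).

Let pt (p : nat) : I := h' (inord p).
Let phi (p : nat) : nat := g (F (pt p)).

Lemma h_pt p : p <= size v -> h (pt p) = p :> nat.
Proof. by move=> pv; rewrite /pt h'K inordK. Qed.

Lemma pt_h i : pt (h i) = i.
Proof. by rewrite /pt inord_val hK. Qed.

Lemma pt_succ r : r < size v ->
  (exists u : hom (pt r) (pt r.+1), dfwd u) \/ (exists u : hom (pt r.+1) (pt r), dbwd u).
Proof.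
move=> rv; have [_ _ hhom hdir] := h_chart.
have [rv' r1v] : r <= size v /\ r.+1 <= size v by split; [apply: ltnW | ].
case: (lin_rel_succ v r) => lr; [left | right].
- have [u] : inhabited (hom (pt r) (pt r.+1)) by apply/hhom; rewrite !h_pt.
  by exists u; apply/(proj1 (hdir _ _ u)); rewrite !h_pt.
- have [u] : inhabited (hom (pt r.+1) (pt r)) by apply/hhom; rewrite !h_pt.
  by exists u; apply/(proj2 (hdir _ _ u)); rewrite !h_pt.
Qed.

Lemma chart_step r : r < size v ->
  phi r <= phi r.+1 /\ (lin_rel w (phi r) (phi r.+1) \/ lin_rel w (phi r.+1) (phi r)).
Proof.
move=> rv; have [_ _ ghom gdir] := g_chart.
case: (pt_succ rv) => [[u /(dfun_fwd F) fu] | [u /(dfun_bwd F) bu]].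
- split; first exact/(proj1 (gdir _ _ (fmor F u))).
  by left; apply/ghom; constructor; exact: (fmor F u).
- split; first exact/(proj2 (gdir _ _ (fmor F u))).
  by right; apply/ghom; constructor; exact: (fmor F u).
Qed.

Lemma chart_phi0 : phi 0 = 0.
Proof.
have [h_bot _ _ _] := h_chart; have [g_bot _ _ _] := g_chart.
by rewrite /phi -{1}h_bot pt_h F_bot g_bot.
Qed.

Lemma chart_phiN : phi (size v) = size w.
Proof.
have [_ h_top _ _] := h_chart; have [_ g_top _ _] := g_chart.
by rewrite /phi -{1}h_top pt_h F_top g_top.
Qed.

Lemma chart_cofinal j : exists i, inhabited (hom j (F i)).
Proof.
have [_ _ ghom _] := g_chart.
have [|p _ jp] := zigzag_cover chart_step (k := g j).
  by rewrite chart_phi0 chart_phiN leq_ord.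
by exists (pt p); apply/ghom.
Qed.

Lemma chart_comma_connected_pt j p q : p <= q <= size v ->
  inhabited (hom j (F (pt p))) -> inhabited (hom j (F (pt q))) ->
  clos_refl_sym_trans I (comma_step F j) (pt p) (pt q).
Proof.
have [_ _ ghom _] := g_chart.
elim: q => [|q IH] /andP[pq qv] jp jq.
  by move: pq; rewrite leqn0 => /eqP->; apply: rst_refl.
case: (ltnP q p) => [qp | pq'].
  have -> : p = q.+1 by apply/eqP; rewrite eqn_leq pq.
  exact: rst_refl.
have jq' : inhabited (hom j (F (pt q))).
  apply/ghom; apply: (lin_rel_between (a := phi p) (b := phi q.+1)); try exact/ghom.
  by rewrite !(zigzag_mono chart_step) ?pq' ?leqnSn ?(ltnW qv).
apply: rst_trans (IH _ jp jq') _; first by rewrite pq' ltnW.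
case: (pt_succ qv) => [[u _] | [u _]]; last apply: rst_sym; by apply: rst_step.
Qed.

Lemma chart_comma_connected j i i' :
  inhabited (hom j (F i)) -> inhabited (hom j (F i')) ->
  clos_refl_sym_trans I (comma_step F j) i i'.
Proof.
wlog le_ii' : i i' / h i <= h i'.
  move=> wlog_le ji ji'; case: (leqP (h i) (h i')) => [le | /ltnW le].
    exact: wlog_le.
  by apply: rst_sym; apply: wlog_le.
rewrite -(pt_h i) -(pt_h i'); apply: chart_comma_connected_pt.
by rewrite le_ii' leq_ord.
Qed.

End ChartedFunctor.

Lemma linear_functor_cofinal (I J : Linear) (F : DFunctor I J) :
  F (lbot I) = lbot J -> F (ltop I) = ltop J ->
  forall j, exists i, inhabited (hom j (F i)).
Proof.
move=> F_bot F_top.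
have [v [h [[h' hK h'K] h_chart]]] := linear_chart I.
have [w [g [_ g_chart]]] := linear_chart J.
exact: (@chart_cofinal I J F F_bot F_top v w h h' g hK h'K h_chart g_chart).
Qed.

Lemma linear_functor_comma_connected (I J : Linear) (F : DFunctor I J) j i i' :
  inhabited (hom j (F i)) -> inhabited (hom j (F i')) ->
  clos_refl_sym_trans I (comma_step F j) i i'.
Proof.
have [v [h [[h' hK h'K] h_chart]]] := linear_chart I.
have [w [g [_ g_chart]]] := linear_chart J.
exact: (@chart_comma_connected I J F v w h h' g hK h'K h_chart g_chart j i i').
Qed.

Definition psh_pull (C D : Cat) (G : Functor D C) (Z : Presheaf C) : Presheaf D.
Proof.
refine (@Build_Presheaf D (fun d => Z (G d)) (fun a b u z => pact Z (fmor G u) z) _ _).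
- by move=> a z; rewrite fmor_id pact_id.
- by move=> a b c f g z; rewrite fmor_comp pact_comp.
Defined.

Definition compatible (C : Cat) (P : Presheaf C) (y : forall c, P c) : Prop :=
  forall c c' (u : hom c c'), y c = pact P u (y c').
Arguments compatible {C} P y.

Section FinalExtension.

Variables (I J : Cat) (F : Functor I J) (P : Presheaf J).
Hypothesis J_thin : forall (x y : J) (f f' : hom x y), f = f'.
Hypothesis F_cofinal : forall j, exists i, inhabited (hom j (F i)).
Hypothesis F_connected : forall j i i',
  inhabited (hom j (F i)) -> inhabited (hom j (F i')) ->
  clos_refl_sym_trans I (comma_step F j) i i'.

Lemma compatible_comma_const (x : forall i, P (F i)) :
  compatible (psh_pull F P) x ->
  forall j i i' (l : hom j (F i)) (l' : hom j (F i')), pact P l (x i) = pact P l' (x i').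
Proof.
move=> x_compat j i i' l l'.
(* Carrying the equivalence of inhabitedness provides, in the transitive case,
   a morphism into the middle object. *)
suff comma_inv a b : clos_refl_sym_trans I (comma_step F j) a b ->
    (inhabited (hom j (F a)) <-> inhabited (hom j (F b))) /\
    forall (la : hom j (F a)) (lb : hom j (F b)), pact P la (x a) = pact P lb (x b).
  exact: (comma_inv _ _ (F_connected (inhabits l) (inhabits l'))).2.
elim=> {a b} [a b [ja jb [u]] | a | a b _ [ab_inh ab_eq]
              | a b c _ [ab_inh ab_eq] _ [bc_inh bc_eq]].
- split=> // la lb; rewrite (x_compat _ _ u) /= -pact_comp.
  by congr (pact P _ _); apply: J_thin.
- by split=> // la la'; rewrite (J_thin la la').
- by split=> [|lb la]; [rewrite ab_inh | rewrite (ab_eq la lb)].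
- split=> [|la lc]; first by rewrite ab_inh bc_inh.
  have [lb] : inhabited (hom j (F b)) by apply/ab_inh; constructor.
  by rewrite (ab_eq la lb) (bc_eq lb lc).
Qed.

Lemma compatible_extend (x : forall i, P (F i)) :
  compatible (psh_pull F P) x ->
  exists y, compatible P y /\ forall i, y (F i) = x i.
Proof.
move=> x_compat; have x_const := compatible_comma_const x_compat.
have inh j : inhabited {i : I & hom j (F i)}.
  by have [i [l]] := F_cofinal j; exact: inhabits (existT _ i l).
pose s j := epsilon (inh j) (fun _ => True).
exists (fun j => pact P (projT2 (s j)) (x (projT1 (s j)))); split.
- by move=> j j' u; rewrite -pact_comp; apply: x_const.
- by move=> i; rewrite (x_const _ _ i _ (idm (F i))) pact_id.
Qed.

Lemma compatible_eq (y y' : forall j, P j) :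
  compatible P y -> compatible P y' -> (forall i, y (F i) = y' (F i)) ->
  forall j, y j = y' j.
Proof.
move=> y_compat y'_compat eq_F j; have [i [l]] := F_cofinal j.
by rewrite (y_compat _ _ l) (y'_compat _ _ l) eq_F.
Qed.

End FinalExtension.

Definition hom_of_eq (C : Cat) (a b : C) (e : a = b) : hom a b :=
  cast_hom (erefl a) e (idm a).

Lemma hom_of_eqK (C : Cat) (a b : C) (e : a = b) :
  comp (hom_of_eq e) (hom_of_eq (esym e)) = idm b.
Proof. by case: b / e; rewrite /hom_of_eq /= comp_id_l. Qed.

Lemma hom_of_esymK (C : Cat) (a b : C) (e : a = b) :
  comp (hom_of_eq (esym e)) (hom_of_eq e) = idm a.
Proof. by case: b / e; rewrite /hom_of_eq /= comp_id_l. Qed.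

Lemma hom_of_eq_cast (C : Cat) (a a' b b' : C) (ea : a = a') (eb : b = b') (f : hom a b) :
  comp (hom_of_eq eb) f = comp (cast_hom ea eb f) (hom_of_eq ea).
Proof. by case: a' / ea; case: b' / eb; rewrite /hom_of_eq /= comp_id_l comp_id_r. Qed.

Lemma hom_of_esym_cast (C : Cat) (a a' b b' : C) (ea : a = a') (eb : b = b') (f : hom a b) :
  comp (hom_of_eq (esym eb)) (cast_hom ea eb f) = comp f (hom_of_eq (esym ea)).
Proof. by case: a' / ea; case: b' / eb; rewrite /hom_of_eq /= comp_id_l comp_id_r. Qed.

Lemma existT_hom_of_eq (C : Cat) (X : Presheaf C) (c c' : C) (e : c = c')
    (N : NatTrans (yon c) X) :
  existT X c (N c (idm c)) = existT X c' (N c' (hom_of_eq (esym e))).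
Proof. by case: c' / e. Qed.

Lemma existT_map (T : Type) (X Y : T -> Type) (f : forall a, X a -> Y a) a b x y :
  existT X a x = existT X b y -> existT Y a (f a x) = existT Y b (f b y).
Proof. by move=> E; have := f_equal (fun s => existT Y (projT1 s) (f _ (projT2 s))) E. Qed.

Lemma nt_yon (C : Cat) (X : Presheaf C) (c : C) (N : NatTrans (yon c) X) a (g : hom a c) :
  N a g = pact X g (N c (idm c)).
Proof. by rewrite -(nt_nat N) /= comp_id_l. Qed.

Definition yon_nt (C : Cat) (X : Presheaf C) (c : C) (z : X c) : NatTrans (yon c) X.
Proof.
refine (@Build_NatTrans C (yon c) X (fun a g => pact X g z) _).
by move=> a b f x /=; rewrite pact_comp.
Defined.

Definition restr_nt (C : Cat) (X : Presheaf C) (c c' : C) (k : hom c c')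
    (N : NatTrans (yon c') X) : NatTrans (yon c) X.
Proof.
refine (@Build_NatTrans C (yon c) X (fun a g => N a (comp k g)) _).
by move=> a b f x /=; rewrite -(nt_nat N) /= comp_assoc.
Defined.

Definition nt_comp (C : Cat) (X Y Z : Presheaf C) (g : NatTrans Y Z) (f : NatTrans X Y) :
  NatTrans X Z.
Proof.
refine (@Build_NatTrans C X Z (fun a x => g a (f a x)) _).
by move=> a b u x; rewrite !nt_nat.
Defined.

Definition nt_id (C : Cat) (X : Presheaf C) : NatTrans X X.
Proof. by refine (@Build_NatTrans C X X (fun a x => x) _). Defined.

Section Cocones.

Variables (C : DCat) (p : Path C) (X : Presheaf C).

Lemma cocone_compatible (lam : forall i, NatTrans (yon (pfun p i)) X) :
  cocone lam -> compatible (psh_pull (pfun p) X) (fun i => lam i _ (idm _)).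
Proof. by move=> lam_cocone i j u /=; rewrite -(lam_cocone i j u) -nt_yon comp_id_r. Qed.

Lemma compatible_cocone (y : forall i, X (pfun p i)) :
  compatible (psh_pull (pfun p) X) y -> cocone (fun i => yon_nt (y i)).
Proof. by move=> y_compat i j u a g /=; rewrite pact_comp (y_compat _ _ u). Qed.

Lemma cocone_nt_comp (Z : Presheaf C) (h : NatTrans X Z)
    (lam : forall i, NatTrans (yon (pfun p i)) X) :
  cocone lam -> cocone (fun i => nt_comp h (lam i)).
Proof. by move=> lam_cocone i j u a g /=; rewrite lam_cocone. Qed.

Lemma colimit_endo_id (lam : forall i, NatTrans (yon (pfun p i)) X) (h : NatTrans X X) :
  is_colimit lam -> (forall i a g, h a (lam i a g) = lam i a g) -> forall a x, h a x = x.
Proof.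
move=> [lam_cocone lam_univ] h_lam a x.
have [k [_ k_uniq]] := lam_univ X lam lam_cocone.
by rewrite (k_uniq h h_lam) -(k_uniq (nt_id X)).
Qed.

End Cocones.

Definition track_points (C : DCat) (p : Path C) (A : Automaton C)
    (lam : forall i : pdom p, NatTrans (yon (pfun p i)) A) : Prop :=
  (forall q, astart A q <->
     q = existT _ (pfun p (lbot (pdom p))) (lam (lbot (pdom p)) _ (idm _))) /\
  (forall q, aaccept A q <->
     q = existT _ (pfun p (ltop (pdom p))) (lam (ltop (pdom p)) _ (idm _))).

Lemma track_points_aut_mor (C : DCat) (p : Path C) (A B : Automaton C)
    (la : forall i, NatTrans (yon (pfun p i)) A) (lb : forall i, NatTrans (yon (pfun p i)) B)
    (h : NatTrans A B) :
  track_points la -> track_points lb -> (forall i a g, h a (la i a g) = lb i a g) ->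
  aut_mor h.
Proof.
move=> [la_start la_acc] [lb_start lb_acc] h_la.
split=> a x.
- by move/la_start/(existT_map h) => E; apply/lb_start; rewrite E h_la.
- by move/la_acc/(existT_map h) => E; apply/lb_acc; rewrite E h_la.
Qed.

Lemma track_iso (C : DCat) (p : Path C) (A B : Automaton C) :
  is_track p A -> is_track p B -> aut_iso A B.
Proof.
move=> [la [la_colim la_pts]] [lb [lb_colim lb_pts]].
have [f [f_la _]] := la_colim.2 B lb lb_colim.1.
have [g [g_lb _]] := lb_colim.2 A la la_colim.1.
exists f, g; split; first exact: track_points_aut_mor f_la.
split; first exact: track_points_aut_mor g_lb.
split.
- by apply: (colimit_endo_id (h := nt_comp g f) la_colim) => i a u /=; rewrite f_la g_lb.
- by apply: (colimit_endo_id (h := nt_comp f g) lb_colim) => i a u /=; rewrite g_lb f_la.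
Qed.

Section PathLe.

Variables (C : DCat) (om ps : Path C) (F : DFunctor (pdom om) (pdom ps)).
Hypotheses (F_bot : F (lbot (pdom om)) = lbot (pdom ps))
           (F_top : F (ltop (pdom om)) = ltop (pdom ps)).
Variable e : forall i, pfun ps (F i) = pfun om i.
Hypothesis e_fmor : forall i j (u : hom i j),
  cast_hom (e i) (e j) (fmor (pfun ps) (fmor F u)) = fmor (pfun om) u.

Let to_om i : hom (pfun ps (F i)) (pfun om i) := hom_of_eq (e i).
Let of_om i : hom (pfun om i) (pfun ps (F i)) := hom_of_eq (esym (e i)).

Lemma to_om_nat i j (u : hom i j) :
  comp (to_om j) (fmor (pfun ps) (fmor F u)) = comp (fmor (pfun om) u) (to_om i).
Proof. by rewrite /to_om (hom_of_eq_cast (e i)) e_fmor. Qed.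

Lemma of_om_nat i j (u : hom i j) :
  comp (of_om j) (fmor (pfun om) u) = comp (fmor (pfun ps) (fmor F u)) (of_om i).
Proof. by rewrite /of_om -e_fmor hom_of_esym_cast. Qed.

Definition restr_cocone (X : Presheaf C) (mu : forall j, NatTrans (yon (pfun ps j)) X) i :
  NatTrans (yon (pfun om i)) X := restr_nt (of_om i) (mu (F i)).

Lemma restr_cocone_comp (X Z : Presheaf C) (h : NatTrans X Z)
    (mu : forall j, NatTrans (yon (pfun ps j)) X) i a g :
  restr_cocone (fun j => nt_comp h (mu j)) i a g = h a (restr_cocone mu i a g).
Proof. by []. Qed.

Lemma restr_cocone_cocone X (mu : forall j, NatTrans (yon (pfun ps j)) X) :
  cocone mu -> cocone (restr_cocone mu).
Proof.
by move=> mu_cocone i j u a g /=; rewrite comp_assoc of_om_nat -comp_assoc mu_cocone.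
Qed.

Lemma restr_cocone_inj X (mu mu' : forall j, NatTrans (yon (pfun ps j)) X) :
  cocone mu -> cocone mu' ->
  (forall i a g, restr_cocone mu i a g = restr_cocone mu' i a g) ->
  forall j a g, mu j a g = mu' j a g.
Proof.
move=> mu_cocone mu'_cocone eq_restr.
suff eq_idm j : mu j _ (idm _) = mu' j _ (idm _).
  by move=> j a g; rewrite !(nt_yon _ g) eq_idm.
move: j; apply: (compatible_eq (P := psh_pull (pfun ps) X)
  (linear_functor_cofinal F_bot F_top)
  (y := fun j => mu j _ (idm _)) (y' := fun j => mu' j _ (idm _))) => [|| i].
- exact: cocone_compatible.
- exact: cocone_compatible.
- by have := eq_restr i _ (to_om i); rewrite /= /of_om /to_om hom_of_esymK.
Qed.

Lemma restr_cocone_surj X (lam : forall i, NatTrans (yon (pfun om i)) X) :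
  cocone lam -> exists mu, cocone mu /\ forall i a g, restr_cocone mu i a g = lam i a g.
Proof.
move=> lam_cocone.
have x_compat :
    compatible (psh_pull F (psh_pull (pfun ps) X)) (fun i => lam i _ (to_om i)).
  by move=> i i' u /=; rewrite -(nt_nat (lam i')) /= to_om_nat lam_cocone.
have [y [y_compat yF]] := compatible_extend (@linear_thin _)
  (linear_functor_cofinal F_bot F_top) (@linear_functor_comma_connected _ _ F) x_compat.
exists (fun j => @yon_nt C X (pfun ps j) (y j)); split; first exact: compatible_cocone.
move=> i a g /=.
by rewrite yF -(nt_nat (lam i)) /= comp_assoc /to_om /of_om hom_of_eqK comp_id_l.
Qed.

Lemma is_colimit_restr X (mu : forall j, NatTrans (yon (pfun ps j)) X) :
  is_colimit mu -> is_colimit (restr_cocone mu).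
Proof.
move=> [mu_cocone mu_univ]; split=> [|Z nu nu_cocone]; first exact: restr_cocone_cocone.
have [nu' [nu'_cocone nu'_nu]] := restr_cocone_surj nu_cocone.
have [h [h_mu h_uniq]] := mu_univ Z nu' nu'_cocone.
exists h; split=> [i a g | h' h'_nu]; first by rewrite -nu'_nu -restr_cocone_comp /= h_mu.
apply: h_uniq; apply: restr_cocone_inj (cocone_nt_comp h' mu_cocone) nu'_cocone _ => i a g.
by rewrite restr_cocone_comp h'_nu nu'_nu.
Qed.

Lemma is_colimit_of_restr X (lam : forall i, NatTrans (yon (pfun om i)) X)
    (mu : forall j, NatTrans (yon (pfun ps j)) X) :
  is_colimit lam -> cocone mu -> (forall i a g, restr_cocone mu i a g = lam i a g) ->
  is_colimit mu.
Proof.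
move=> [lam_cocone lam_univ] mu_cocone mu_lam; split=> // Z nu nu_cocone.
have [h [h_lam h_uniq]] := lam_univ Z _ (restr_cocone_cocone nu_cocone).
exists h; split=> [|h' h'_nu].
- apply: restr_cocone_inj (cocone_nt_comp h mu_cocone) nu_cocone _ => i a g.
  by rewrite restr_cocone_comp mu_lam h_lam.
- by apply: h_uniq => i a g; rewrite -mu_lam; apply: h'_nu.
Qed.

Lemma track_points_restr (A : Automaton C) (mu : forall j, NatTrans (yon (pfun ps j)) A) :
  track_points mu <-> track_points (restr_cocone mu).
Proof.
have base i : existT _ (pfun ps (F i)) (mu (F i) _ (idm _)) =
              existT _ (pfun om i) (restr_cocone mu i _ (idm _)).
  by rewrite /= comp_id_r; apply: existT_hom_of_eq.
by rewrite /track_points -(base (lbot _)) -(base (ltop _)) F_bot F_top.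
Qed.

Lemma is_track_le (A : Automaton C) : is_track om A <-> is_track ps A.
Proof.
split=> [[lam [lam_colim lam_pts]] | [mu [mu_colim mu_pts]]].
- have [mu [mu_cocone mu_lam]] := restr_cocone_surj lam_colim.1.
  exists mu; split; first exact: is_colimit_of_restr lam_colim mu_cocone mu_lam.
  by apply/track_points_restr; rewrite /track_points !mu_lam.
- exists (restr_cocone mu); split; first exact: is_colimit_restr.
  exact/track_points_restr.
Qed.

End PathLe.

Lemma path_le_track (C : DCat) (om ps : Path C) (A : Automaton C) :
  path_le om ps -> (is_track om A <-> is_track ps A).
Proof. by case=> F [F_bot [F_top [e e_fmor]]]; apply: is_track_le. Qed.

Theorem proposition7 (C : DCat) (om ps : Path C) :
  path_equiv om ps ->
  forall (A B : Automaton C), is_track om A -> is_track ps B -> aut_iso A B.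
Proof.
move=> om_ps A B om_A ps_B.
suff track_eq A' : is_track om A' <-> is_track ps A'.
  by apply: (track_iso (p := ps)) => //; apply/track_eq.
elim: om_ps A' {A B om_A ps_B} => [x y /path_le_track | x | x y _ IH | x y z _ IH1 _ IH2] A //.
- by rewrite IH.
- by rewrite IH1 IH2.
Qed.
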